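(* Let $H=\varprojlim\langle\{H_n\}_{n\in\mathbb{N}},\{h^n_k\}_{k<n}\rangle$ be a profinite poset and let $\mathbb{P}=\varprojlim\langle\{P_n\}_{n\in\mathbb{N}},\{p^n_k\}_{k<n}\rangle$, where $\langle\{P_n\},\{p^n_k\}\rangle$ is a Fraïssé sequence in the category of finite posets with quotient maps. Then there is a continuous quotient map $f:\mathbb{P}\to H$.
   Context: A quotient map between posets is a surjective order-preserving map $\phi:A\to B$ such that for all $p\le r$ in $B$ there are $x\le y$ in $A$ with $\phi(x)=p,\phi(y)=r$. A profinite poset is an inverse limit $\varprojlim\langle\{P_n\},\{p^m_k\}\rangle=\{(x_n)\in\prod_n P_n:p^{n+1}_n(x_{n+1})=x_n\ \forall n\}$ of nonempty finite posets $P_n$ with quotient maps $p^m_k:P_m\to P_k$ ($k<m$) satisfying $p^k_l\circ p^m_k=p^m_l$, ordered coordinatewise and topologized as a subspace of the product of discrete spaces. Such a sequence is a Fraïssé sequence if (U) for every finite poset $X$ there are $n$ and a quotient map $P_n\to X$, and (A) for every $k$, every finite poset $Y$ and quotient map $f:Y\to P_k$ there exist $\ell>k$ and a quotient map $g:P_\ell\to Y$ with $f\circ g=p^\ell_k$. *)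

From mathcomp Require Import all_boot.
Set Implicit Arguments. Unset Strict Implicit. Unset Printing Implicit Defensive.

Record finPoset := FinPoset {
  fp_sort :> finType;
  fp_le : rel fp_sort;
  fp_refl : reflexive fp_le;
  fp_anti : antisymmetric fp_le;
  fp_trans : transitive fp_le }.

Definition quotient_map_rel {A B : Type} (leA : A -> A -> Prop)
  (leB : B -> B -> Prop) (f : A -> B) : Prop :=
  [/\ (forall b, exists a, f a = b),
      (forall x y, leA x y -> leB (f x) (f y)) &
      (forall pp r, leB pp r -> exists x y, [/\ leA x y, f x = pp & f y = r])].

Definition quotient_map (A B : finPoset) (f : A -> B) : Prop :=
  quotient_map_rel (fun x y => fp_le x y) (fun x y => fp_le x y) f.

(* An inverse sequence of nonempty finite posets with quotient bonding maps
   p m k : P m -> P k (meaningful for k < m), compatible under composition. *)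
Definition inv_seq (P : nat -> finPoset) (p : forall m k, P m -> P k) : Prop :=
  [/\ (forall n, 0 < #|P n|),
      (forall k m, k < m -> quotient_map (p m k)) &
      (forall l k m, l < k -> k < m -> forall x, p k l (p m k x) = p m l x)].

Definition inv_limit (P : nat -> finPoset) (p : forall m k, P m -> P k) : Type :=
  { x : forall n, P n | forall n, p n.+1 n (x n.+1) = x n }.

Definition lim_le (P : nat -> finPoset) (p : forall m k, P m -> P k)
  (x y : inv_limit p) : Prop :=
  forall n, fp_le (proj1_sig x n) (proj1_sig y n).

Definition lim_quotient_map (P : nat -> finPoset) (p : forall m k, P m -> P k)
  (Q : nat -> finPoset) (q : forall m k, Q m -> Q k)
  (f : inv_limit p -> inv_limit q) : Prop :=
  quotient_map_rel (@lim_le P p) (@lim_le Q q) f.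

(* Continuity w.r.t. the subspace topology of the product of discrete spaces:
   each output coordinate is locally constant, i.e. determined on a basic
   neighbourhood {y | y_i = x_i for all i <= m}. *)
Definition lim_continuous (P : nat -> finPoset) (p : forall m k, P m -> P k)
  (Q : nat -> finPoset) (q : forall m k, Q m -> Q k)
  (f : inv_limit p -> inv_limit q) : Prop :=
  forall (x : inv_limit p) (n : nat), exists m : nat, forall y : inv_limit p,
    (forall i, i <= m -> proj1_sig y i = proj1_sig x i) ->
    proj1_sig (f y) n = proj1_sig (f x) n.

Definition fraisse_seq (P : nat -> finPoset) (p : forall m k, P m -> P k) : Prop :=
  (forall X : finPoset, 0 < #|X| ->
     exists n (g : P n -> X), quotient_map g) /\
  (forall k (Y : finPoset) (f : Y -> P k), quotient_map f ->
     exists l (g : P l -> Y), [/\ k < l, quotient_map g &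
                                 forall x, f (g x) = p l k x]).

From mathcomp Require Import all_boot.
From Stdlib Require Import ClassicalEpsilon FunctionalExtensionality.
Set Implicit Arguments. Unset Strict Implicit. Unset Printing Implicit Defensive.

(* We build a ladder of quotient maps g_k : P_{n_k} -> H_k, n_0 < n_1 < ...,
   commuting with the bonding maps.  Given g_k, apply the amalgamation property
   of the Fraisse sequence to the first projection of the pullback of g_k and
   h^{k+1}_k; composing with the second projection gives g_{k+1}.  Because the
   pullback is a quotient image of P_{n_{k+1}}, every comparable pair of P_{n_k}
   and comparable pair of H_{k+1} with matching images lifts to a comparable pair
   of P_{n_{k+1}}.  The induced map x |-> (g_k(x_{n_k}))_k is continuous since its
   k-th coordinate only reads x_{n_k}, and it is a quotient map since a
   comparable pair of threads of H lifts level by level. *)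

Lemma dependent_choice_nat (T : nat -> Type) (R : forall k, T k -> T k.+1 -> Prop)
    (t0 : T 0) :
  (forall k (t : T k), exists t', R k t t') ->
  exists a : forall k, T k, a 0 = t0 /\ forall k, R k (a k) (a k.+1).
Proof.
move=> total_R.
pose next k t := proj1_sig (constructive_indefinite_description _ (total_R k t)).
exists (fix a k := match k return T k with 0 => t0 | k'.+1 => next k' (a k') end).
split=> // k.
exact: (proj2_sig (constructive_indefinite_description _ (total_R k _))).
Qed.

Lemma quotient_map_comp (A B C : finPoset) (f : A -> B) (g : B -> C) :
  quotient_map f -> quotient_map g -> quotient_map (fun x => g (f x)).
Proof.
case=> f_onto f_mono f_lift [g_onto g_mono g_lift]; split.
- move=> c; case: (g_onto c) => b <-; case: (f_onto b) => a <-; by exists a.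
- by move=> x y /f_mono /g_mono.
- move=> c1 c2 /g_lift [b1 [b2 [le_b <- <-]]].
  case: (f_lift _ _ le_b) => a1 [a2 [le_a <- <-]]; by exists a1, a2.
Qed.

Section InverseLimit.
Variables (P : nat -> finPoset) (p : forall m k, P m -> P k).
Arguments p : clear implicits.
Hypothesis Hp : inv_seq p.

Lemma inv_limit_ext (x y : inv_limit p) :
  (forall n, proj1_sig x n = proj1_sig y n) -> x = y.
Proof.
case: x => x hx; case: y => y hy /= eq_xy.
have eq_fun : x = y by apply: functional_extensionality_dep.
subst y; congr exist; apply: functional_extensionality_dep => n; exact: eq_irrelevance.
Qed.

Lemma inv_limit_proj (x : inv_limit p) m n :
  n < m -> p m n (proj1_sig x m) = proj1_sig x n.
Proof.
have [_ _ p_comp] := Hp; case: x => x hx /=.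
elim: m => // m IH; rewrite ltnS leq_eqVlt; case/orP=> [/eqP -> // | lt_nm].
by rewrite -(p_comp n m m.+1 lt_nm (ltnSn m)) hx IH.
Qed.

Variables (nn : nat -> nat) (nn_inc : forall k, nn k < nn k.+1).

Lemma subseq_mono k j : k < j -> nn k < nn j.
Proof.
elim: j => // j IH; rewrite ltnS leq_eqVlt; case/orP=> [/eqP -> // | lt_kj].
exact: ltn_trans (IH lt_kj) (nn_inc j).
Qed.

Lemma subseq_ge k : k <= nn k.
Proof. elim: k => // k IH; exact: leq_ltn_trans IH (nn_inc k). Qed.

Section SubseqThread.
Variables (a : forall k, P (nn k))
  (a_compat : forall k, p (nn k.+1) (nn k) (a k.+1) = a k).

Lemma subseq_compat_proj j k : k < j -> p (nn j) (nn k) (a j) = a k.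
Proof.
have [_ _ p_comp] := Hp.
elim: j k => // j IH k; rewrite ltnS leq_eqVlt; case/orP=> [/eqP -> // | lt_kj].
by rewrite -(p_comp _ _ _ (subseq_mono lt_kj) (nn_inc j)) a_compat IH.
Qed.

(* The n-th coordinate is read off one level above, where nn (n + 1) > n. *)
Lemma subseq_thread_compat n :
  p n.+1 n (p (nn n.+2) n.+1 (a n.+2)) = p (nn n.+1) n (a n.+1).
Proof.
have [_ _ p_comp] := Hp.
rewrite (p_comp _ _ _ (ltnSn n) (subseq_ge n.+2)).
by rewrite -(p_comp _ _ _ (subseq_ge n.+1) (nn_inc n.+1)) a_compat.
Qed.

Definition subseq_thread : inv_limit p :=
  exist _ (fun n => p (nn n.+1) n (a n.+1)) subseq_thread_compat.

Lemma subseq_thread_at k : proj1_sig subseq_thread (nn k) = a k.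
Proof. apply: subseq_compat_proj; exact: leq_trans (subseq_ge k) _. Qed.

End SubseqThread.
End InverseLimit.

Section Pullback.
Variables (A B C : finPoset) (f : A -> C) (g : B -> C).

Definition pullback_sort := {ab : A * B | f ab.1 == g ab.2}.

Definition pullback_le : rel pullback_sort :=
  fun x y => fp_le (val x).1 (val y).1 && fp_le (val x).2 (val y).2.

Lemma pullback_le_refl : reflexive pullback_le.
Proof. by move=> x; rewrite /pullback_le !fp_refl. Qed.

Lemma pullback_le_anti : antisymmetric pullback_le.
Proof.
move=> [[a b] ?] [[a' b'] ?]; rewrite /pullback_le /=.
move=> /andP[/andP[le_a le_b] /andP[le_a' le_b']]; apply: val_inj => /=.
by rewrite (@fp_anti _ a a') ?le_a ?le_a' // (@fp_anti _ b b') ?le_b ?le_b'.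
Qed.

Lemma pullback_le_trans : transitive pullback_le.
Proof.
move=> y x z /andP[le_xy1 le_xy2] /andP[le_yz1 le_yz2]; apply/andP; split.
- exact: fp_trans le_xy1 le_yz1.
- exact: fp_trans le_xy2 le_yz2.
Qed.

Definition pullback : finPoset :=
  FinPoset pullback_le_refl pullback_le_anti pullback_le_trans.

Definition pullback_fst (x : pullback) : A := (val x).1.
Definition pullback_snd (x : pullback) : B := (val x).2.

Definition pullback_pair a b (e : f a = g b) : pullback := exist _ (a, b) (introT eqP e).

Lemma pullback_commute (x : pullback) : f (pullback_fst x) = g (pullback_snd x).
Proof. exact: eqP (valP x). Qed.

Lemma pullback_fst_quotient :
  (forall x y, fp_le x y -> fp_le (f x) (f y)) -> quotient_map g ->
  quotient_map pullback_fst.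
Proof.
move=> f_mono [g_onto _ g_lift]; split.
- move=> a; case: (g_onto (f a)) => b gb; by exists (pullback_pair (esym gb)).
- by move=> x y /andP[].
- move=> a1 a2 le_a; have [b1 [b2 [le_b e1 e2]]] := g_lift _ _ (f_mono _ _ le_a).
  exists (pullback_pair (esym e1)), (pullback_pair (esym e2)).
  by split=> //; rewrite /= /pullback_le /= le_a le_b.
Qed.

Lemma pullback_snd_quotient :
  quotient_map f -> (forall x y, fp_le x y -> fp_le (g x) (g y)) ->
  quotient_map pullback_snd.
Proof.
move=> [f_onto _ f_lift] g_mono; split.
- move=> b; case: (f_onto (g b)) => a fa; by exists (pullback_pair fa).
- by move=> x y /andP[].
- move=> b1 b2 le_b; have [a1 [a2 [le_a e1 e2]]] := f_lift _ _ (g_mono _ _ le_b).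
  exists (pullback_pair e1), (pullback_pair e2).
  by split=> //; rewrite /= /pullback_le /= le_b le_a.
Qed.

End Pullback.

(* The weak-pullback property of the square [g \o a = b \o g'], restricted to
   comparable pairs. *)
Definition lifts_comparable_pairs (A A' B B' : finPoset)
    (a : A' -> A) (b : B' -> B) (g : A -> B) (g' : A' -> B') : Prop :=
  forall a1 a2 b1 b2, fp_le a1 a2 -> fp_le b1 b2 -> g a1 = b b1 -> g a2 = b b2 ->
  exists a1' a2', [/\ fp_le a1' a2', a a1' = a1, a a2' = a2, g' a1' = b1 & g' a2' = b2].

Section Ladder.
Variables (H : nat -> finPoset) (h : forall m k, H m -> H k)
  (P : nat -> finPoset) (p : forall m k, P m -> P k).
Arguments h : clear implicits. Arguments p : clear implicits.
Hypotheses (Hh : inv_seq h) (Hp : inv_seq p) (Hf : fraisse_seq p).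

Definition rung k := {n : nat & {g : P n -> H k | quotient_map g}}.

Definition rung_level k (s : rung k) : nat := projT1 s.
Definition rung_map k (s : rung k) : P (rung_level s) -> H k := sval (projT2 s).
Arguments rung_map {k} s.

Definition rung_step k (s : rung k) (s' : rung k.+1) : Prop :=
  let n := rung_level s in let l := rung_level s' in
  [/\ n < l, (forall x, h k.+1 k (rung_map s' x) = rung_map s (p l n x)) &
      lifts_comparable_pairs (p l n) (h k.+1 k) (rung_map s) (rung_map s')].

Lemma rung_step_exists k (s : rung k) : exists s' : rung k.+1, rung_step s s'.
Proof.
case: s => n [g g_quo]; rewrite /rung_step /rung_map /rung_level /=.
have [_ h_quo _] := Hh; have hk_quo := h_quo k k.+1 (ltnSn k).
have [_ g_mono _] := g_quo; have [_ hk_mono _] := hk_quo.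
have fst_quo := pullback_fst_quotient g_mono hk_quo.
have [l [G [lt_nl G_quo G_comm]]] := Hf.2 n _ _ fst_quo.
have G'_quo := quotient_map_comp G_quo (pullback_snd_quotient g_quo hk_mono).
exists (existT _ l (exist _ _ G'_quo)); split=> //=.
- by move=> x; rewrite -G_comm pullback_commute.
move=> a1 a2 b1 b2 le_a le_b e1 e2.
have le_y : fp_le (pullback_pair e1) (pullback_pair e2) by apply/andP.
have [_ _ G_lift] := G_quo.
have [x1 [x2 [le_x E1 E2]]] := G_lift _ _ le_y.
by exists x1, x2; rewrite -!G_comm E1 E2.
Qed.

Section LadderMap.
Variables (st : forall k, rung k) (st_step : forall k, rung_step (st k) (st k.+1)).

Let nn k := rung_level (st k).
Let gg k : P (nn k) -> H k := rung_map (st k).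
Arguments gg : clear implicits.

Let nn_inc k : nn k < nn k.+1.
Proof. by case: (st_step k). Qed.

Let gg_quotient k : quotient_map (gg k).
Proof. exact: (proj2_sig (projT2 (st k))). Qed.

Lemma ladder_map_compat (x : inv_limit p) k :
  h k.+1 k (gg k.+1 (proj1_sig x (nn k.+1))) = gg k (proj1_sig x (nn k)).
Proof.
have [_ comm _] := st_step k.
by rewrite /gg comm (inv_limit_proj Hp) //; apply: nn_inc.
Qed.

Definition ladder_map (x : inv_limit p) : inv_limit h :=
  exist _ (fun k => gg k (proj1_sig x (nn k))) (ladder_map_compat x).

Lemma ladder_map_continuous : lim_continuous ladder_map.
Proof. by move=> x n; exists (nn n) => y eq_yx /=; rewrite eq_yx. Qed.

Lemma ladder_map_mono x y : lim_le x y -> lim_le (ladder_map x) (ladder_map y).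
Proof. by move=> le_xy k; have [_ g_mono _] := gg_quotient k; apply: g_mono. Qed.

Lemma ladder_map_lift (u v : inv_limit h) : lim_le u v ->
  exists x y, [/\ lim_le x y, ladder_map x = u & ladder_map y = v].
Proof.
move=> le_uv.
pose T k := {ab : P (nn k) * P (nn k) |
  [/\ fp_le ab.1 ab.2, gg k ab.1 = proj1_sig u k & gg k ab.2 = proj1_sig v k]}.
pose R k (t : T k) (t' : T k.+1) :=
  p (nn k.+1) (nn k) (sval t').1 = (sval t).1 /\
  p (nn k.+1) (nn k) (sval t').2 = (sval t).2.
have [_ _ g0_lift] := gg_quotient 0.
have [a1 [a2 [le_a e1 e2]]] := g0_lift _ _ (le_uv 0).
have R_total k (t : T k) : exists t', R k t t'.
  case: t => [[c1 c2] [le_c ec1 ec2]].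
  have [_ _ lift] := st_step k.
  have [c1' [c2' [le_c' E1 E2 F1 F2]]] := lift _ _ _ _ le_c (le_uv k.+1)
    (etrans ec1 (esym (proj2_sig u k))) (etrans ec2 (esym (proj2_sig v k))).
  by exists (exist _ (c1', c2') (And3 le_c' F1 F2)).
have [t [_ t_step]] := dependent_choice_nat (exist _ (a1, a2) (And3 le_a e1 e2)) R_total.
pose x := subseq_thread Hp nn_inc (fun k => (t_step k).1).
pose y := subseq_thread Hp nn_inc (fun k => (t_step k).2).
exists x, y; split.
- move=> i /=; have [_ p_quo _] := Hp.
  have [_ p_mono _] := p_quo _ _ (subseq_ge nn_inc i.+1).
  by apply: p_mono; case: (proj2_sig (t i.+1)).
- apply: inv_limit_ext => k; change (gg k (sval x (nn k)) = sval u k).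
  by rewrite subseq_thread_at; case: (proj2_sig (t k)).
- apply: inv_limit_ext => k; change (gg k (sval y (nn k)) = sval v k).
  by rewrite subseq_thread_at; case: (proj2_sig (t k)).
Qed.

Lemma ladder_map_quotient : lim_quotient_map ladder_map.
Proof.
split; [| exact: ladder_map_mono | exact: ladder_map_lift].
move=> u; have [x [_ [_ fx _]]] := ladder_map_lift (fun n => fp_refl (sval u n)).
by exists x.
Qed.

End LadderMap.
End Ladder.

Theorem mainTheorem5 (H : nat -> finPoset) (h : forall m k, H m -> H k)
  (P : nat -> finPoset) (p : forall m k, P m -> P k) :
  inv_seq h -> inv_seq p -> fraisse_seq p ->
  exists f : inv_limit p -> inv_limit h,
    lim_quotient_map f /\ lim_continuous f.
Proof.
move=> Hh Hp Hf.
have [H_nonempty _ _] := Hh.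
have [n0 [g0 g0_quo]] := Hf.1 (H 0) (H_nonempty 0).
have [st [_ st_step]] :=
  dependent_choice_nat (existT _ n0 (exist _ g0 g0_quo)) (rung_step_exists Hh Hf).
exists (ladder_map Hp st_step); split.
- exact: ladder_map_quotient.
- exact: ladder_map_continuous.
Qed.
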